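(* Every uniformly convex Banach space $X$ has the weak fixed point property for mappings which diminish the radius of invariant convex subsets: for every nontrivial weakly compact convex subset $K$ of $X$, every self-mapping $T:K\to K$ which diminishes the radius of invariant convex subsets of $K$ has a fixed point in $K$.
   Context: Nontrivial means containing more than one point. For $x\in X$ and $A\subseteq X$, $r_x(A)=\sup\{\|x-y\|:y\in A\}$. A mapping $T:K\to K$ diminishes the radius of invariant convex subsets of $K$ if for every convex $A\subseteq K$ with $T(A)\subseteq A$, $r_{Tx}(T(A))\le r_x(A)$ for every $x\in K$. *)

From HB Require Import structures.
From mathcomp Require Import all_boot all_order all_algebra.
From mathcomp Require Import all_classical all_reals all_analysis.
Set Implicit Arguments. Unset Strict Implicit. Unset Printing Implicit Defensive.
Import Order.TTheory GRing.Theory Num.Theory.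
Import numFieldNormedType.Exports.
Local Open Scope classical_set_scope.
Local Open Scope ring_scope.

Section Defs.
Context {R : realType} {X : normedModType R}.

Definition convex_subset (A : set X) : Prop :=
  forall x y (t : R), A x -> A y -> 0 <= t -> t <= 1 ->
    A (t *: x + (1 - t) *: y).

Definition nontrivial (A : set X) : Prop := exists x y, A x /\ A y /\ x <> y.

Definition dual_space : Type :=
  { f : X -> R | (forall (a : R) (x y : X), f (a *: x + y) = a * f x + f y)
                 /\ continuous f }.

Definition weak_eval (x : X) : prod_topology (fun _ : dual_space => R) :=
  fun f => proj1_sig f x.

(* The weak topology sigma(X, X dual): the initial topology of all continuous
   linear functionals, i.e. of the evaluation map into the product. *)
Definition weak_topology : Type := initial_topology weak_eval.

Definition weakly_compact (K : set X) : Prop := @compact weak_topology K.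

Definition radius (x : X) (A : set X) : \bar R :=
  ereal_sup [set (`|x - y|)%:E | y in A].

Definition diminishes_radius (K : set X) (T : X -> X) : Prop :=
  forall A : set X, A `<=` K -> convex_subset A -> T @` A `<=` A ->
    forall x, K x -> (radius (T x) (T @` A) <= radius x A)%E.

End Defs.

Definition uniformly_convex {R : realType} (X : normedModType R) : Prop :=
  forall eps : R, 0 < eps -> eps <= 2 ->
    exists2 delta : R, 0 < delta &
      forall x y : X, `|x| <= 1 -> `|y| <= 1 -> eps <= `|x - y| ->
        `|(2 : R)^-1 *: (x + y)| <= 1 - delta.

(* Zorn's lemma and weak compactness give a minimal nonempty convex T-invariant
   subset M of K that is relatively weakly closed.  Closed balls are weakly
   closed (by Hahn-Banach) and weakly compact sets are bounded, so M has a
   Chebyshev center c of radius r, unique by uniform convexity.  As T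
   diminishes radii, T(M) lies in the ball of radius r around T c; by
   minimality so does M, so T c is a Chebyshev center as well, and T c = c. *)

From Pilot Require Import Defs.
From HB Require Import structures.
From mathcomp Require Import all_boot all_order all_algebra.
From mathcomp Require Import all_classical all_reals all_analysis.
From mathcomp Require Import ring lra finmap.
Import Order.TTheory GRing.Theory Num.Theory.
Import numFieldNormedType.Exports.
Local Open Scope classical_set_scope.
Local Open Scope ring_scope.
Set Implicit Arguments. Unset Strict Implicit. Unset Printing Implicit Defensive.

Lemma chain_seq_least (T : Type) (I : eqType) (P : I -> Prop) (F : I -> set T)
    (s : seq I) :
  (forall i j, P i -> P j -> F i `<=` F j \/ F j `<=` F i) ->
  (forall i, i \in s -> P i) -> s != [::] ->
  exists2 i, i \in s & forall j, j \in s -> F i `<=` F j.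
Proof.
move=> F_total; elim: s => [//|a s IHs] s_P _.
have Pa : P a by apply: s_P; rewrite mem_head.
have [->|s_neq0] := eqVneq s [::].
  by exists a; rewrite ?mem_head // => j; rewrite inE => /eqP ->.
have [|i i_s i_least] := IHs _ s_neq0.
  by move=> i i_s; apply: s_P; rewrite inE i_s orbT.
have Pi : P i by apply: s_P; rewrite inE i_s orbT.
have [ai|ia] := F_total _ _ Pa Pi.
  exists a; first exact: mem_head.
  move=> j; rewrite inE => /orP[/eqP ->//|j_s].
  exact: subset_trans ai (i_least _ j_s).
exists i; first by rewrite inE i_s orbT.
by move=> j; rewrite inE => /orP[/eqP ->//|]; apply: i_least.
Qed.

Lemma compact_chain_meet (T : ptopologicalType) (K : set T) (I : choiceType)
    (D : set I) (F : I -> set T) :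
  compact K -> D !=set0 -> (forall i, D i -> closed (F i)) ->
  (forall i, D i -> K `&` F i !=set0) ->
  (forall i j, D i -> D j -> F i `<=` F j \/ F j `<=` F i) ->
  exists2 x, K x & forall i, D i -> F i x.
Proof.
move=> K_compact [i0 Di0] F_closed F_meet F_total.
move: K_compact; rewrite compact_In0 => /(_ I D (fun i => K `&` F i)) K_fip.
have [||x x_in] := K_fip.
- by exists F.
- move=> D' D'_D; have [->|D'_neq0] := eqVneq D' fset0.
    by exists point => i /=; rewrite in_fset0.
  have [||i i_D' i_least] := chain_seq_least F_total (s := enum_fset D').
  + by move=> i i_D'; apply/set_mem/D'_D.
  + have /fset0Pn[j j_D'] := D'_neq0; apply/eqP => D'_nil.
    by rewrite -[j \in D']/(j \in enum_fset D') D'_nil in j_D'.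
  have [x [Kx Fx]] := F_meet i (set_mem (D'_D _ i_D')).
  by exists x => j j_D'; split => //; apply: i_least.
by exists x; [case: (x_in i0 Di0)|move=> i Di; case: (x_in i Di)].
Qed.

Section HahnBanach.
Context {R : realType} {V : lmodType R}.
Variable p : V -> R.
Hypothesis p_add : forall x y, p (x + y) <= p x + p y.
Hypothesis p_scale : forall (a : R) x, 0 <= a -> p (a *: x) = a * p x.

Definition linear_subspace (D : set V) :=
  D 0 /\ forall (a : R) x y, D x -> D y -> D (a *: x + y).

Lemma linear_subspaceZ D a x : linear_subspace D -> D x -> D (a *: x).
Proof. by move=> [D0 DS] Dx; rewrite -[_ *: _]addr0; apply: DS. Qed.

Lemma linear_subspaceD D x y : linear_subspace D -> D x -> D y -> D (x + y).
Proof. by move=> [_ DS] Dx Dy; rewrite -[x]scale1r; apply: DS. Qed.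

Lemma linear_subspaceB D x y : linear_subspace D -> D x -> D y -> D (x - y).
Proof. by move=> [_ DS] Dx Dy; rewrite addrC -scaleN1r; apply: DS. Qed.

Record dominated_functional := DominatedFunctional {
  dom : set V;
  dfun : V -> R;
  dom_subspace : linear_subspace dom;
  dfun_linear : forall (a : R) x y, dom x -> dom y ->
    dfun (a *: x + y) = a * dfun x + dfun y;
  dfun_le : forall x, dom x -> dfun x <= p x }.

Definition extends (f g : dominated_functional) :=
  dom f `<=` dom g /\ forall x, dom f x -> dfun g x = dfun f x.

Lemma dom0 f : dom f 0.
Proof. by case: (dom_subspace f). Qed.

Lemma dfun0 f : dfun f 0 = 0.
Proof.
have := dfun_linear 1 (dom0 f) (dom0 f).
rewrite scale1r addr0 mul1r; lra.
Qed.

Lemma dfunZ f a x : dom f x -> dfun f (a *: x) = a * dfun f x.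
Proof.
by move=> Dx; have := dfun_linear a Dx (dom0 f); rewrite addr0 dfun0 addr0.
Qed.

Lemma dfunD f x y : dom f x -> dom f y -> dfun f (x + y) = dfun f x + dfun f y.
Proof. by move=> Dx Dy; have := dfun_linear 1 Dx Dy; rewrite scale1r mul1r. Qed.

(* The admissible values of the extension at [w] lie between a supremum and an
   infimum; the supremum is one of them. *)
Lemma extension_value f w : exists c : R, forall x t, dom f x ->
  dfun f x + t * c <= p (x + t *: w).
Proof.
pose L := [set dfun f y - p (y - w) | y in dom f].
have L_le y y' : dom f y -> dom f y' -> dfun f y - p (y - w) <= p (y' + w) - dfun f y'.
  move=> Dy Dy'.
  have := dfun_le (linear_subspaceD (dom_subspace f) Dy Dy').
  have := p_add (y - w) (y' + w).
  rewrite dfunD // addrACA addNr addr0; lra.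
have L_sup : has_sup L.
  split; first by exists (dfun f 0 - p (0 - w)); exists 0 => //; exact: dom0.
  by exists (p (0 + w) - dfun f 0) => _ [y Dy <-]; apply: L_le => //; exact: dom0.
exists (sup L) => x t Dx.
have [->|t_neq0] := eqVneq t 0.
  by rewrite mul0r addr0 scale0r addr0; apply: dfun_le.
have [u Du ->] : exists2 u, dom f u & x = t *: u.
  exists (t^-1 *: x); first exact: linear_subspaceZ (dom_subspace f) Dx.
  by rewrite scalerA mulfV // scale1r.
rewrite dfunZ // -[t *: u + _]scalerDr.
have [t_gt0|t_le0] := ltrP 0 t.
  have le_c : sup L <= p (u + w) - dfun f u.
    by apply: ge_sup => [|_ [y Dy <-]]; [case: L_sup|exact: L_le].
  rewrite p_scale; [nra|exact: ltW].
have t_lt0 : t < 0 by rewrite lt_neqAle t_neq0.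
have Du' : dom f (- u) by rewrite -scaleN1r; exact: linear_subspaceZ (dom_subspace f) Du.
have le_c : dfun f (- u) - p (- u - w) <= sup L.
  by apply: sup_upper_bound => //; exists (- u).
have -> : t *: (u + w) = (- t) *: (- u - w) by rewrite -opprD scalerN scaleNr opprK.
rewrite -scaleN1r dfunZ // scaleN1r in le_c.
rewrite p_scale; [nra|by rewrite oppr_ge0 ltW].
Qed.

Lemma dfunN f x : dom f x -> dfun f (- x) = - dfun f x.
Proof. by move=> Dx; rewrite -scaleN1r dfunZ // mulN1r. Qed.

Lemma extend_by_vector f w c : ~ dom f w ->
  (forall x t, dom f x -> dfun f x + t * c <= p (x + t *: w)) ->
  exists g, [/\ extends f g, dom g w & dfun g w = c].
Proof.
move=> Nw c_ok.
pose D x := exists t, dom f (x - t *: w).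
have coord_uniq x t t' : dom f (x - t *: w) -> dom f (x - t' *: w) -> t = t'.
  move=> Dt Dt'; apply: contrapT => neq_tt'; apply: Nw.
  have -> : w = (t' - t)^-1 *: ((x - t *: w) - (x - t' *: w)).
    rewrite opprD opprK addrACA subrr add0r addrC -scalerBl scalerA.
    by rewrite mulVf ?scale1r // subr_eq0 eq_sym; apply/eqP.
  exact: linear_subspaceZ (dom_subspace f) (linear_subspaceB (dom_subspace f) Dt Dt').
pose coord x := if pselect (D x) is left Dx then projT1 (cid Dx) else 0.
have coordP x t : dom f (x - t *: w) -> coord x = t.
  move=> Dt; rewrite /coord; case: pselect => [Dx|[]]; last by exists t.
  by case: cid => t' Dt' /=; apply: coord_uniq Dt' Dt.
pose g x := dfun f (x - coord x *: w) + coord x * c.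
have gE x t : dom f x -> g (x + t *: w) = dfun f x + t * c.
  by move=> Dx; rewrite /g (coordP _ t) ?addrK.
have Ddecomp x : D x -> exists t, exists2 u, dom f u & x = u + t *: w.
  by case=> t Dt; exists t, (x - t *: w); rewrite ?subrK.
have D_subspace : linear_subspace D.
  split; first by exists 0; rewrite scale0r subr0; exact: dom0.
  move=> a x y [t Dt] [t' Dt']; exists (a * t + t').
  rewrite scalerDl -scalerA opprD addrACA -scalerBr.
  exact: (proj2 (dom_subspace f)).
have g_linear a x y : D x -> D y -> g (a *: x + y) = a * g x + g y.
  move=> /Ddecomp[t [u Du ->]] /Ddecomp[t' [u' Du' ->]].
  rewrite scalerDr scalerA addrACA -scalerDl !gE ?dfun_linear //; first ring.
  exact: (proj2 (dom_subspace f)).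
have g_le x : D x -> g x <= p x.
  by move=> /Ddecomp[t [u Du ->]]; rewrite gE //; apply: c_ok.
exists (DominatedFunctional D_subspace g_linear g_le); split => /=.
- split=> [x Dx|x Dx]; first by exists 0; rewrite scale0r subr0.
  by have := gE x 0 Dx; rewrite scale0r addr0 mul0r addr0.
- by exists 1; rewrite scale1r subrr; exact: dom0.
- by have := gE 0 1 (dom0 f); rewrite scale1r add0r dfun0 add0r mul1r.
Qed.

Lemma extendsxx f : extends f f.
Proof. by split. Qed.

Lemma extends_trans f g h : extends f g -> extends g h -> extends f h.
Proof.
move=> [fg gf] [gh hg]; split; first exact: subset_trans gh.
by move=> x Dx; rewrite hg ?gf //; apply: fg.
Qed.

Lemma extends_chain_ub (A : set dominated_functional) : A !=set0 ->
  (forall f g, A f -> A g -> extends f g \/ extends g f) ->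
  exists h, forall f, A f -> extends f h.
Proof.
move=> [f0 Af0] A_total.
pose D x := exists2 f, A f & dom f x.
have common x y : D x -> D y -> exists f, [/\ A f, dom f x & dom f y].
  move=> [f Af Dx] [g Ag Dy].
  have [[fg _]|[gf _]] := A_total _ _ Af Ag.
    by exists g; split => //; apply: fg.
  by exists f; split => //; apply: gf.
pose h x := if pselect (D x) is left Dx then dfun (projT1 (cid2 Dx)) x else 0.
have hE f x : A f -> dom f x -> h x = dfun f x.
  move=> Af Dx; rewrite /h; case: pselect => [Dx'|[]]; last by exists f.
  case: cid2 => g Ag Dgx /=.
  by have [[_ ->]|[_ ->]] := A_total _ _ Af Ag.
have D_subspace : linear_subspace D.
  split; first by exists f0 => //; exact: dom0.
  move=> a x y Dx Dy; have [f [Af Dfx Dfy]] := common _ _ Dx Dy.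
  by exists f => //; apply: (proj2 (dom_subspace f)).
have h_linear a x y : D x -> D y -> h (a *: x + y) = a * h x + h y.
  move=> Dx Dy; have [f [Af Dfx Dfy]] := common _ _ Dx Dy.
  rewrite !(hE f) ?dfun_linear //; exact: (proj2 (dom_subspace f)).
have h_le x : D x -> h x <= p x.
  by move=> [f Af Dfx]; rewrite (hE f) //; apply: dfun_le.
exists (DominatedFunctional D_subspace h_linear h_le) => f Af.
by split=> [x Dx|x Dx] /=; [exists f|apply: hE].
Qed.

Theorem hahn_banach f : exists g, extends f g /\ dom g = setT.
Proof.
pose E := {g | extends f g}.
pose ext (g h : E) := `[< extends (sval g) (sval h) >].
have [m m_max] : exists m, premaximal ext m.
  apply: (@ZL_preorder E (exist _ f (extendsxx f))).
  - by move=> g; apply/asboolP; apply: extendsxx.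
  - by move=> g h k /asboolP gh /asboolP hk; apply/asboolP; apply: extends_trans gh hk.
  move=> A A_total.
  have [[g Ag]|A0] := pselect (A !=set0); last first.
    by exists (exist _ f (extendsxx f)) => g Ag; exfalso; apply: A0; exists g.
  have [||h h_ub] := @extends_chain_ub (sval @` A).
  - by exists (sval g), g.
  - move=> _ _ [g1 Ag1 <-] [g2 Ag2 <-].
    by have [/asboolP|/asboolP] := A_total _ _ Ag1 Ag2; [left|right].
  have fh : extends f h := extends_trans (svalP g) (h_ub _ (ex_intro2 _ _ g Ag erefl)).
  by exists (exist _ h fh) => g' Ag'; apply/asboolP; apply: h_ub; exists g'.
exists (sval m); split; first exact: svalP m.
apply/seteqP; split=> // w _; apply: contrapT => Nw.
have [c c_ok] := extension_value (sval m) w.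
have [g [mg Dgw _]] := extend_by_vector Nw c_ok.
have /asboolP [gm _] := m_max (exist _ g (extends_trans (svalP m) mg)) (asboolT mg).
exact/Nw/gm.
Qed.

End HahnBanach.

Section NormingFunctional.
Context {R : realType} {X : normedModType R}.

Lemma linear_contraction_continuous (f : X -> R) :
  (forall (a : R) x y, f (a *: x + y) = a * f x + f y) ->
  (forall x, `|f x| <= `|x|) -> continuous f.
Proof.
move=> f_linear f_le x.
have fB u v : f (u - v) = f u - f v.
  by rewrite addrC -scaleN1r f_linear mulN1r addrC.
apply/(@cvgrPdist_lt _ _ _ (nbhs x)) => e e_gt0; near=> y.
rewrite -fB; apply: le_lt_trans (f_le _) _.
by near: y; apply: cvgr_dist_lt.
Unshelve. all: by end_near.
Qed.

Lemma norming_functional (z : X) : exists f : @dual_space R X,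
  (forall x, `|sval f x| <= `|x|) /\ sval f z = `|z|.
Proof.
pose p (x : X) := `|x|.
have p_add x y : p (x + y) <= p x + p y by apply: ler_normD.
have p_scale (a : R) x : 0 <= a -> p (a *: x) = a * p x.
  by move=> a_ge0; rewrite /p normrZ ger0_norm.
have zero_subspace : linear_subspace [set 0 : X].
  by split=> // a _ _ -> ->; rewrite scaler0 addr0.
have zero_linear a (x y : X) : x = 0 -> y = 0 -> 0 = a * 0 + 0 :> R.
  by rewrite mulr0 addr0.
have zero_le x : x = 0 -> 0 <= p x by move=> _; exact: normr_ge0.
pose f0 := DominatedFunctional zero_subspace zero_linear zero_le.
have [g [f0g Dgz gz]] : exists g, [/\ extends f0 g, dom g z & dfun g z = `|z|].
  have [->|z_neq0] := eqVneq z 0.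
    by exists f0; rewrite normr0; split=> //; apply: extendsxx.
  apply: extend_by_vector => [/= z0|x t /= ->]; first by rewrite z0 eqxx in z_neq0.
  by rewrite !add0r /p normrZ; apply: ler_wpM2r => //; exact: ler_norm.
have [h [gh Dh]] := hahn_banach p_add p_scale g.
have h_linear a x y : dfun h (a *: x + y) = a * dfun h x + dfun h y.
  by apply: dfun_linear; rewrite Dh.
have h_le x : `|dfun h x| <= `|x|.
  have h_le_p y : dfun h y <= `|y| by apply: dfun_le; rewrite Dh.
  by rewrite ler_norml h_le_p andbT lerNl -dfunN ?Dh // -(normrN x) h_le_p.
exists (exist _ (dfun h) (conj h_linear (linear_contraction_continuous h_linear h_le))).
by split => //=; rewrite (proj2 gh).
Qed.

End NormingFunctional.

(* [proj_continuous] is stated for an eqType of indices. *)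
HB.instance Definition _ (R : realType) (X : normedModType R) :=
  gen_eqMixin (@dual_space R X).

Section WeakTopology.
Context {R : realType} {X : normedModType R}.
Local Notation WX := (@weak_topology R X).

Lemma dual_weak_continuous (f : @dual_space R X) :
  continuous (sval f : WX -> R).
Proof.
move=> x.
exact: (continuous_comp (@initial_continuous _ _ (@weak_eval R X) x)
  (@proj_continuous _ (fun=> R) f _)).
Qed.

Definition weakly_closed (A : set X) := @closed WX A.

Definition weak_closure (A : set X) : set X := @closure WX A.

Lemma weakly_closed_weak_closure A : weakly_closed (weak_closure A).
Proof. exact: closed_closure. Qed.

Lemma subset_weak_closure A : A `<=` weak_closure A.
Proof. exact: (@subset_closure WX). Qed.

Lemma weak_closureS A B : A `<=` B -> weak_closure A `<=` weak_closure B.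
Proof. exact: (@closureS WX). Qed.

Lemma weak_closure_sub A G : weakly_closed G -> A `<=` G -> weak_closure A `<=` G.
Proof.
by move=> /closure_id G_closed /weak_closureS; rewrite /weak_closure -G_closed.
Qed.

Lemma dualB (f : @dual_space R X) u v : sval f (u - v) = sval f u - sval f v.
Proof.
have [f_linear _] := svalP f.
by rewrite addrC -scaleN1r f_linear mulN1r addrC.
Qed.

Lemma weakly_closed_dual_le (f : @dual_space R X) c :
  weakly_closed [set x | sval f x <= c].
Proof.
apply: (@preimage_closed WX R (sval f) [set y | y <= c]); last exact: closed_le.
by move=> x _; apply: dual_weak_continuous.
Qed.

(* A closed ball is the intersection of the half-spaces of norm-one
   functionals containing it, by the existence of norming functionals. *)
Lemma weakly_closed_ball (c : X) r : weakly_closed (closed_ball_ Num.norm c r).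
Proof.
pose unit_dual := [set f : @dual_space R X | forall x, `|sval f x| <= `|x|].
have -> : closed_ball_ Num.norm c r =
    \bigcap_(f in unit_dual) [set z | sval f z <= sval f c + r].
  apply/seteqP; split=> z; rewrite /closed_ball_ /= distrC.
    move=> zc f f_le; have := le_trans (ler_norm _) (f_le (z - c)).
    rewrite dualB /=; lra.
  move=> z_in; have [f [f_le <-]] := norming_functional (z - c).
  have := z_in f f_le; rewrite /= dualB; lra.
by apply: closed_bigI => f _; apply: weakly_closed_dual_le.
Qed.

End WeakTopology.

Section SignedSeries.
Context {R : realType} {X : normedModType R}.
Local Notation q := ((3 : R)^-1).

(* Instead of the uniform boundedness principle: a single functional
   [sum_k (+/-) 3^-k phi_k] whose signs are chosen greedily is large at every
   [xs n]. *)
Fixpoint signed_sum (xs : nat -> X) (phi : nat -> X -> R) (m : nat) (y : X) : R :=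
  if m is k.+1 then
    let s := signed_sum xs phi k in
    s y + (if 0 <= s (xs k) then 1 else -1) * q ^+ k * phi k y
  else 0.

Variables (xs : nat -> X) (phi : nat -> X -> R).
Hypothesis phi_linear : forall n (a : R) x y, phi n (a *: x + y) = a * phi n x + phi n y.
Hypothesis phi_le : forall n y, `|phi n y| <= `|y|.
Hypothesis phi_norming : forall n, phi n (xs n) = `|xs n|.

Local Notation s := (signed_sum xs phi).

Lemma signed_sum_linear m (a : R) x y : s m (a *: x + y) = a * s m x + s m y.
Proof. by elim: m => [|m IHm] /=; [rewrite mulr0 addr0|rewrite IHm phi_linear; ring]. Qed.

Lemma q_expr_ge0 n : 0 <= q ^+ n.
Proof. by rewrite exprn_ge0 // invr_ge0. Qed.

Lemma signed_sum_tail n k y :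
  `|s (n + k) y - s n y| <= 3 / 2 * (q ^+ n - q ^+ (n + k)) * `|y|.
Proof.
elim: k => [|k IHk]; first by rewrite addn0 !subrr normr0 mulr0 mul0r.
rewrite addnS /= addrAC.
set e := (if _ then _ else _).
have e_norm : `|e| = 1 by rewrite /e; case: ifP; rewrite ?normrN normr1.
have step_le : `|e * q ^+ (n + k) * phi (n + k) y| <= q ^+ (n + k) * `|y|.
  rewrite !normrM e_norm mul1r ger0_norm ?q_expr_ge0 //.
  by apply: ler_wpM2l; [exact: q_expr_ge0|exact: phi_le].
apply: le_trans (ler_normD _ _) _; apply: le_trans (lerD IHk step_le) _.
have -> : 3 / 2 * (q ^+ n - q ^+ (n + k)) * `|y| + q ^+ (n + k) * `|y| =
    3 / 2 * (q ^+ n - q * q ^+ (n + k)) * `|y| by field.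
by rewrite exprS.
Qed.

Lemma signed_sum_cauchy n m y : (n <= m)%N ->
  `|s m y - s n y| <= 3 / 2 * q ^+ n * `|y|.
Proof.
move=> le_nm; rewrite -(subnKC le_nm); apply: le_trans (signed_sum_tail _ _ _) _.
apply: ler_wpM2r => //; apply: ler_wpM2l => //.
by rewrite lerBlDr lerDl q_expr_ge0.
Qed.

Lemma signed_sum_cvg y : cvg ((fun m => s m y) @ \oo).
Proof.
apply/cauchy_cvgP; apply: cauchy_exP => e e_gt0.
have q_lt1 : `|q| < 1 by rewrite ger0_norm ?invr_ge0 // invf_lt1 // ltr1n.
have /cvgr0Pnorm_lt/(_ e e_gt0) [N _ N_le] := cvg_geometric (3 / 2 * (`|y| + 1)) q_lt1.
exists (s N y); exists N => // m /= le_Nm.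
rewrite -ball_normE /ball_ /= distrC; apply: le_lt_trans (signed_sum_cauchy _ le_Nm) _.
apply: le_lt_trans (N_le N (leqnn N)); rewrite /geometric /=.
rewrite ger0_norm; last by rewrite mulr_ge0 ?q_expr_ge0.
have := q_expr_ge0 N; have := normr_ge0 y; nra.
Qed.

Definition signed_limit y := lim ((fun m => s m y) @ \oo).

Lemma signed_limit_linear (a : R) x y :
  signed_limit (a *: x + y) = a * signed_limit x + signed_limit y.
Proof.
rewrite /signed_limit (_ : (fun m => _) = (fun m => a * s m x + s m y)).
  apply: cvg_lim => //; apply: cvgD; last exact: signed_sum_cvg.
  by apply: cvgMl_tmp; exact: signed_sum_cvg.
by apply/funext => m; rewrite signed_sum_linear.
Qed.

Lemma signed_limit_tail n y : `|signed_limit y - s n y| <= 3 / 2 * q ^+ n * `|y|.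
Proof.
have tail_cvg : (fun m => `|s m y - s n y|) @ \oo --> `|signed_limit y - s n y|.
  by apply: cvg_norm; apply: cvgB; [exact: signed_sum_cvg|exact: cvg_cst].
rewrite -(cvg_lim _ tail_cvg) //; apply: limr_le; first exact: cvgP tail_cvg.
by exists n => // m /= le_nm; exact: signed_sum_cauchy.
Qed.

Lemma signed_limit_le y : `|signed_limit y| <= 3 / 2 * `|y|.
Proof. by have := signed_limit_tail 0 y; rewrite /= subr0 expr0 mulr1. Qed.

(* The sign chosen at step [n] makes the [n]-th term reinforce [s n (xs n)];
   the later terms are too small to undo this. *)
Lemma signed_limit_large n : q ^+ n * `|xs n| / 2 <= `|signed_limit (xs n)|.
Proof.
have tail := signed_limit_tail n.+1 (xs n).
have step : q ^+ n * `|xs n| <= `|s n.+1 (xs n)|.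
  have qx_ge0 : 0 <= q ^+ n * `|xs n| by rewrite mulr_ge0 ?q_expr_ge0.
  rewrite /= phi_norming; case: ifPn => [s_ge0|].
    by rewrite mul1r ger0_norm ?addr_ge0 // lerDr.
  by rewrite -ltNge mulN1r mulNr => s_lt0; rewrite ler0_norm; lra.
have := ler_normB (signed_limit (xs n)) (signed_limit (xs n) - s n.+1 (xs n)).
rewrite opprB addrC subrK; rewrite exprS in tail.
have tail_eq : 3 / 2 * (q * q ^+ n) * `|xs n| = q ^+ n * `|xs n| / 2 by field.
lra.
Qed.

End SignedSeries.

Section WeaklyBounded.
Context {R : realType} {X : normedModType R}.

Lemma weakly_bounded_bounded (A : set X) :
  (forall f : @dual_space R X, exists M : R, forall x, A x -> `|sval f x| <= M) ->
  exists B, forall x, A x -> `|x| <= B.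
Proof.
move=> A_wbounded; apply: contrapT => A_unbounded.
have big B : exists x, A x /\ B < `|x|.
  apply: contrapT => no_big; apply: A_unbounded; exists B => x Ax.
  by rewrite leNgt; apply/negP => lt_Bx; apply: no_big; exists x.
pose q : R := 3^-1.
have q_expr_gt0 n : 0 < q ^+ n by rewrite exprn_gt0 // invr_gt0.
have [xs xsP] : exists xs : nat -> X, forall n, A (xs n) /\ 3 * n%:R < q ^+ n * `|xs n|.
  have /choice [xs xsP] := fun n => big (3 * n%:R / q ^+ n).
  by exists xs => n; have [Axn] := xsP n; rewrite ltr_pdivrMr // [_ * q ^+ n]mulrC.
have /choice [phi phiP] := fun n => norming_functional (xs n).
pose ph n : X -> R := sval (phi n).
have ph_linear n (a : R) x y : ph n (a *: x + y) = a * ph n x + ph n y.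
  exact: (proj1 (svalP (phi n))).
have ph_le n y : `|ph n y| <= `|y| := proj1 (phiP n) y.
have ph_norming n : ph n (xs n) = `|xs n| := proj2 (phiP n).
pose h y := 2 / 3 * signed_limit xs ph y.
have h_linear (a : R) x y : h (a *: x + y) = a * h x + h y.
  by rewrite /h signed_limit_linear //; ring.
have h_le y : `|h y| <= `|y|.
  rewrite /h normrM ger0_norm //.
  have := signed_limit_le xs ph_le y; lra.
pose hd : @dual_space R X :=
  exist _ h (conj h_linear (linear_contraction_continuous h_linear h_le)).
have [M hM] := A_wbounded hd.
pose n := (Num.truncn `|M|).+1.
have [Axn xn_big] := xsP n.
have := signed_limit_large ph_le ph_norming n.
have := hM _ Axn; rewrite /= /h normrM ger0_norm //.
have := truncnS_gt `|M|; have := ler_norm M; rewrite -/n.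
lra.
Qed.

Lemma weakly_compact_bounded (K : set X) : weakly_compact K ->
  exists B, forall x, K x -> `|x| <= B.
Proof.
move=> K_wcompact; apply: weakly_bounded_bounded => f.
have f_cont := @dual_weak_continuous R X f.
have /compact_bounded[M [_ M_bound]] : compact (sval f @` K).
  exact: (continuous_compact (continuous_subspaceT f_cont)).
by exists (M + 1) => x Kx; apply: M_bound; [rewrite ltrDl|exists x].
Qed.

End WeaklyBounded.

Section ChebyshevCenter.
Context {R : realType} {X : normedModType R}.

Lemma convex_closed_ball (c : X) r : convex_subset (closed_ball_ Num.norm c r).
Proof.
rewrite /closed_ball_ => x y t /= cx cy t_ge0 t_le1.
have -> : c - (t *: x + (1 - t) *: y) = t *: (c - x) + (1 - t) *: (c - y).
  by rewrite !scalerBr addrACA -scalerDl subrKC scale1r opprD.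
apply: le_trans (ler_normD _ _) _.
rewrite !normrZ !ger0_norm ?subr_ge0 //.
have -> : r = t * r + (1 - t) * r by ring.
by apply: lerD; apply: ler_wpM2l => //; rewrite subr_ge0.
Qed.

Lemma uniformly_convex_midpoint : uniformly_convex X ->
  forall eps : R, 0 < eps -> eps <= 2 ->
  exists2 delta : R, 0 < delta & forall (y x1 x2 : X) (r : R), 0 < r ->
    `|x1 - y| <= r -> `|x2 - y| <= r -> eps * r <= `|x1 - x2| ->
    `|2^-1 *: (x1 + x2) - y| <= (1 - delta) * r.
Proof.
move=> UC eps eps_gt0 eps_le2; have [delta delta_gt0 UCdelta] := UC _ eps_gt0 eps_le2.
exists delta => // y x1 x2 r r_gt0 x1y x2y eps_le.
have scaled_le1 x : `|x - y| <= r -> `|r^-1 *: (x - y)| <= 1.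
  by rewrite normrZ gtr0_norm ?invr_gt0 // mulrC ler_pdivrMr // mul1r.
have := UCdelta _ _ (scaled_le1 _ x1y) (scaled_le1 _ x2y).
rewrite -scalerBr opprB addrA subrK normrZ gtr0_norm ?invr_gt0 //.
rewrite mulrC ler_pdivlMr // => /(_ eps_le).
rewrite -scalerDr scalerA mulrC -scalerA normrZ gtr0_norm ?invr_gt0 //.
rewrite mulrC ler_pdivrMr // [_ * r]mulrC.
have -> : 2^-1 *: (x1 - y + (x2 - y)) = 2^-1 *: (x1 + x2) - y.
  rewrite addrACA -opprD scalerBr; congr (_ - _).
  by rewrite -[y + y]/(y *+ 2) -[y *+ 2]scaler_nat scalerA mulVf ?pnatr_eq0 // scale1r.
by [].
Qed.

Variable M : set X.

Definition chebyshev_centers (s : R) :=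
  [set x | M x /\ forall y, M y -> `|x - y| <= s].

Definition chebyshev_radius := inf [set s | chebyshev_centers s !=set0].

Lemma chebyshev_lbound : has_lbound [set s | chebyshev_centers s !=set0].
Proof. by exists 0 => s [x [Mx /(_ x Mx)]]; rewrite subrr normr0. Qed.

Lemma has_inf_chebyshev : M !=set0 -> (exists B, forall x, M x -> `|x| <= B) ->
  has_inf [set s | chebyshev_centers s !=set0].
Proof.
move=> [m Mm] [B M_le]; split; last exact: chebyshev_lbound.
exists (B + B), m; split=> // y My.
by apply: le_trans (ler_normB _ _) _; apply: lerD; apply: M_le.
Qed.

Lemma chebyshev_center_unique : uniformly_convex X -> convex_subset M ->
  forall x1 x2, chebyshev_centers chebyshev_radius x1 ->
    chebyshev_centers chebyshev_radius x2 -> x1 = x2.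
Proof.
set r := chebyshev_radius => UC M_convex x1 x2 [Mx1 x1_le] [Mx2 x2_le].
apply: contrapT => /eqP x12_neq.
have d_gt0 : 0 < `|x1 - x2| by rewrite normr_gt0 subr_eq0.
have r_gt0 : 0 < r := lt_le_trans d_gt0 (x1_le _ Mx2).
have [|delta delta_gt0 mid_le] := uniformly_convex_midpoint UC (divr_gt0 d_gt0 r_gt0).
  by rewrite ler_pdivrMr //; have := x1_le _ Mx2; lra.
have mid_center : chebyshev_centers ((1 - delta) * r) (2^-1 *: (x1 + x2)).
  split.
    have half : 1 - 2^-1 = 2^-1 :> R by field.
    by have := M_convex _ _ 2^-1 Mx1 Mx2; rewrite half -scalerDr; apply; lra.
  by move=> y My; apply: mid_le; rewrite ?divfK ?gt_eqF //; [exact: x1_le|exact: x2_le].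
have := ge_inf chebyshev_lbound (ex_intro _ _ mid_center).
rewrite -/r; nra.
Qed.

End ChebyshevCenter.

Section RelativelyWeaklyClosed.
Context {R : realType} {X : normedModType R}.
Variable K : set X.
Hypothesis K_wcompact : weakly_compact K.

Lemma chebyshev_center_exists (M : set X) :
  M `<=` K -> K `&` weak_closure M `<=` M -> M !=set0 ->
  chebyshev_centers M (chebyshev_radius M) !=set0.
Proof.
move=> MK M_closed M_ne.
have [B K_le] := weakly_compact_bounded K_wcompact.
have M_inf := has_inf_chebyshev M_ne (ex_intro _ B (fun x Mx => K_le x (MK x Mx))).
set r := chebyshev_radius M.
pose G s := weak_closure M `&` \bigcap_(y in M) closed_ball_ Num.norm y s.
have [||||x Kx x_in] :=
  @compact_chain_meet (@weak_topology R X) K R [set s | r < s] G K_wcompact.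
- by exists (r + 1); rewrite /= ltrDl.
- move=> s _; apply: closedI; first exact: weakly_closed_weak_closure.
  by apply: closed_bigI => y _; apply: weakly_closed_ball.
- move=> s /= r_lt_s.
  have sr_gt0 : 0 < s - r by rewrite subr_gt0.
  have [s' [z [Mz z_le]] lt_s's] := inf_adherent sr_gt0 M_inf.
  exists z; split; first exact: MK.
  split=> [|y My]; first exact: subset_weak_closure.
  rewrite /closed_ball_ /= distrC; apply: le_trans (z_le _ My) _.
  by rewrite -/r addrC subrK in lt_s's; apply: ltW.
- move=> s s' _ _; have [le_ss'|le_s's] := leP s s'; [left|right];
    move=> z [wz z_le]; split=> // y My; apply: le_trans (z_le _ My) _ => //.
  exact: ltW.
have Mx : M x by apply: M_closed; split=> //; case: (x_in (r + 1)); rewrite /= ?ltrDl.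
exists x; split=> // y My; apply/ler_addgt0Pr => e e_gt0.
have [_ x_le] := x_in (r + e) (ltr_pwDr e_gt0 (lexx r)).
by rewrite distrC; apply: x_le.
Qed.

Variable T : X -> X.

Definition invariant_closed_convex (M : set X) :=
  [/\ M `<=` K, M !=set0, convex_subset M, (forall x, M x -> M (T x))
    & K `&` weak_closure M `<=` M].

Definition minimal_invariant (M : set X) := invariant_closed_convex M /\
  forall N, invariant_closed_convex N -> N `<=` M -> M `<=` N.

Lemma invariant_chain_bigcap (C : set (set X)) : C !=set0 ->
  (forall M, C M -> invariant_closed_convex M) ->
  (forall M N, C M -> C N -> M `<=` N \/ N `<=` M) ->
  invariant_closed_convex (\bigcap_(M in C) M).
Proof.
move=> [M0 CM0] C_inv C_total.
have C_closed M x : C M -> K x -> weak_closure M x -> M x.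
  by move=> CM Kx wx; have [_ _ _ _] := C_inv M CM; apply; split.
split.
- by move=> x /(_ M0 CM0); have [+ _ _ _ _] := C_inv M0 CM0; apply.
- have [||||x Kx x_in] :=
    @compact_chain_meet (@weak_topology R X) K _ C weak_closure K_wcompact.
  + by exists M0.
  + by move=> M _; apply: weakly_closed_weak_closure.
  + move=> M CM; have [MK [m Mm] _ _ _] := C_inv M CM.
    by exists m; split; [apply: MK|apply: subset_weak_closure].
  + move=> M N CM CN; have [MN|NM] := C_total M N CM CN; [left|right];
      exact: weak_closureS.
  by exists x => M CM; apply: C_closed (x_in M CM).
- move=> x y t x_in y_in t_ge0 t_le1 M CM.
  by have [_ _ + _ _] := C_inv M CM; apply => //; [apply: x_in|apply: y_in].
- by move=> x x_in M CM; have [_ _ _ + _] := C_inv M CM; apply; apply: x_in.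
- move=> x [Kx wx] M CM; apply: C_closed => //.
  by apply: weak_closureS wx => y; apply.
Qed.

Lemma exists_minimal_invariant : invariant_closed_convex K ->
  exists M, minimal_invariant M.
Proof.
move=> K_inv.
pose S := {M | invariant_closed_convex M}.
pose sub (M N : S) := `[< sval N `<=` sval M >].
have [M M_max] : exists M, premaximal sub M.
  apply: (@ZL_preorder S (exist _ K K_inv)).
  - by move=> M; apply/asboolP.
  - by move=> M N P /asboolP NM /asboolP PN; apply/asboolP; apply: subset_trans NM.
  move=> C C_total.
  have [[M0 CM0]|C0] := pselect (C !=set0); last first.
    by exists (exist _ K K_inv) => M CM; exfalso; apply: C0; exists M.
  have I_inv : invariant_closed_convex (\bigcap_(M in sval @` C) M).
    apply: invariant_chain_bigcap => [|_ [M _ <-]|_ _ [M CM <-] [N CN <-]].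
    - by exists (sval M0), M0.
    - exact: svalP.
    - by have [/asboolP|/asboolP] := C_total _ _ CM CN; [right|left].
  by exists (exist _ _ I_inv) => M CM; apply/asboolP => x; apply; exists M.
exists (sval M); split=> [|N N_inv NM]; first exact: svalP.
by have /asboolP := M_max (exist _ N N_inv) (asboolT NM).
Qed.

Lemma minimal_invariant_sub (M W : set X) : minimal_invariant M ->
  weakly_closed W -> convex_subset W -> T @` M `<=` W -> M `<=` W.
Proof.
move=> [[MK [m Mm] M_convex M_inv M_closed] M_min] W_closed W_convex TM_W.
suff /M_min /(_ (@subIsetl _ _ _)) MW : invariant_closed_convex (M `&` W).
  by move=> x /MW [].
have TMW x : M x -> W (T x) by move=> Mx; apply: TM_W; exists x.
split=> [x [/MK]| |x y t [Mx Wx] [My Wy] t_ge0 t_le1|x [Mx _]|x [Kx wx]] //.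
- by exists (T m); split; [apply: M_inv|apply: TMW].
- by split; [apply: M_convex|apply: W_convex].
- by split; [apply: M_inv|apply: TMW].
have Wx : W x := weak_closure_sub W_closed (@subIsetr _ M W) wx.
by split=> //; apply: M_closed; split=> //; apply: weak_closureS wx => y [].
Qed.

Lemma minimal_invariant_fixed_point (M : set X) :
  uniformly_convex X -> diminishes_radius K T -> minimal_invariant M ->
  exists2 x, M x & T x = x.
Proof.
move=> UC T_dim M_min; have [[MK M_ne M_convex TM M_closed] _] := M_min.
set r := chebyshev_radius M.
have [c [Mc c_le]] := chebyshev_center_exists MK M_closed M_ne.
have TM_M : T @` M `<=` M by move=> _ [y My <-]; apply: TM.
have radius_c : (Defs.radius c M <= r%:E)%E.
  by apply: ge_ereal_sup => _ [y My <-]; rewrite lee_fin; apply: c_le.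
have TM_ball : T @` M `<=` closed_ball_ Num.norm (T c) r.
  move=> z TMz; rewrite /closed_ball_ /= -lee_fin.
  apply: le_trans (le_trans (T_dim _ MK M_convex TM_M _ (MK _ Mc)) radius_c).
  by apply: ereal_sup_ubound; exists z.
have M_ball : M `<=` closed_ball_ Num.norm (T c) r.
  apply: minimal_invariant_sub M_min _ _ TM_ball.
    exact: weakly_closed_ball.
  exact: convex_closed_ball.
exists c => //; apply: (chebyshev_center_unique UC M_convex); last by split.
by split=> [|y /M_ball]; [apply: TM|].
Qed.

End RelativelyWeaklyClosed.

Unset Implicit Arguments.

Theorem corollary3p1 (R : realType) (X : completeNormedModType R) :
  uniformly_convex X ->
  forall K : set X, nontrivial K -> weakly_compact K -> convex_subset K ->
  forall T : X -> X, (forall x, K x -> K (T x)) ->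
    diminishes_radius K T ->
    exists x, K x /\ T x = x.
Proof.
move=> UC K [a [_ [Ka _]]] K_wcompact K_convex T TK T_dim.
have K_inv : invariant_closed_convex K T K by split=> //; exists a.
have [M M_min] := exists_minimal_invariant K_wcompact K_inv.
have [x Mx Tx] := minimal_invariant_fixed_point K_wcompact UC T_dim M_min.
by have [[MK _ _ _ _] _] := M_min; exists x; split=> //; apply: MK.
Qed.
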